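(* Let $H_1,\dots,H_n$ be null hypotheses with $p$-values $PV_1,\dots,PV_n\in[0,1]$ that may have an arbitrary joint dependence structure. Let $I\subseteq\{1,\dots,n\}$ be the set of true null hypotheses, and for each $i$ let $F_i$ be the null distribution function of $PV_i$ (so that $P(PV_j\le x)=F_j(x)$ for $j\in I$), satisfying $F_i(u)\le u$ for all $u\in(0,1)$. Let $G(x)=\sum_{i=1}^n F_i(x)$ for $x\in[0,1]$. Then for every sequence of critical values $0\le c_1\le c_2\le\cdots\le c_n\le 1$, setting $c_0=0$, the step-up procedure with critical values $c$ satisfies $$\mathrm{FDR}(c)\le \sum_{r=1}^n\sum_{j\in I}\frac{1}{r}\bigl(F_j(c_r)-F_j(c_{r-1})\bigr)\le \sum_{r=1}^n\frac{1}{r}\bigl(G(c_r)-G(c_{r-1})\bigr).$$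
   Context: Step-up procedure with critical values $c_1\le\cdots\le c_n$: let $PV_{(1)}\le\cdots\le PV_{(n)}$ be the ordered $p$-values with corresponding hypotheses $H_{(1)},\dots,H_{(n)}$; let $k=\max\{i: PV_{(i)}\le c_i\}$ and reject $H_{(1)},\dots,H_{(k)}$; if no such $i$ exists, reject nothing. With $R$ the number of rejections and $V$ the number of rejected true null hypotheses, $\mathrm{FDR}(c)=E[V/\max(R,1)]$. *)

From Stdlib Require Import Reals.
From mathcomp Require Import ssreflect ssrfun ssrbool eqtype ssrnat seq path.

Set Implicit Arguments.
Unset Strict Implicit.

Local Open Scope R_scope.

Record prob_space (Omega : Type) := ProbSpace {
  measurable : (Omega -> Prop) -> Prop;
  prob : (Omega -> Prop) -> R;
  meas_full : measurable (fun _ => True);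
  meas_compl : forall A, measurable A -> measurable (fun w => ~ A w);
  meas_union : forall A : nat -> Omega -> Prop,
      (forall k, measurable (A k)) -> measurable (fun w => exists k, A k w);
  prob_nonneg : forall A, measurable A -> 0 <= prob A;
  prob_full : prob (fun _ => True) = 1;
  prob_sigma_add : forall A : nat -> Omega -> Prop,
      (forall k, measurable (A k)) ->
      (forall k l w, k <> l -> A k w -> A l w -> False) ->
      infinite_sum (fun k => prob (A k)) (prob (fun w => exists k, A k w))
}.

Definition Rsum_seq (s : seq nat) (f : nat -> R) : R :=
  foldr (fun i acc => f i + acc) 0 s.

Definition Rleb (x y : R) : bool := if Rle_dec x y then true else false.

(* Ordered p-values: the pairs (i, PV_i) sorted (stably) by p-value, so that
   the r-th entry (r = 1..n) is (index of H_(r), PV_(r)). *)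
Definition ordered_pvals (n : nat) (p : nat -> R) : seq (nat * R) :=
  sort (fun a b => Rleb a.2 b.2) [seq (i, p i) | i <- iota 1 n].

Definition PV_ord (n : nat) (p : nat -> R) (r : nat) : R :=
  (nth (0%N, 0) (ordered_pvals n p) r.-1).2.
Definition H_ord (n : nat) (p : nat -> R) (r : nat) : nat :=
  (nth (0%N, 0) (ordered_pvals n p) r.-1).1.

Definition stepup_k (n : nat) (c : nat -> R) (p : nat -> R) : nat :=
  foldr maxn 0%N [seq i <- iota 1 n | Rleb (PV_ord n p i) (c i)].

Definition stepup_rejected (n : nat) (c : nat -> R) (p : nat -> R) : seq nat :=
  [seq H_ord n p r | r <- iota 1 (stepup_k n c p)].

Definition num_R (n : nat) (c : nat -> R) (p : nat -> R) : nat :=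
  size (stepup_rejected n c p).
Definition num_V (n : nat) (I : nat -> bool) (c : nat -> R) (p : nat -> R) : nat :=
  count I (stepup_rejected n c p).

(* FDR(c) = E[ V / max(R,1) ].  V/max(R,1) is a simple random variable with
   values v/r (0 <= v <= n, 1 <= r <= n; the value 0 when R = 0 contributes 0),
   so its expectation is written out as the finite sum of value * probability. *)
Definition FDR (Omega : Type) (P : prob_space Omega) (n : nat) (I : nat -> bool)
    (c : nat -> R) (PV : nat -> Omega -> R) : R :=
  Rsum_seq (iota 1 n) (fun r =>
    Rsum_seq (iota 0 n.+1) (fun v =>
      (INR v / INR r) *
      prob P (fun w => num_R n c (fun i => PV i w) = r /\
                        num_V n I c (fun i => PV i w) = v))).

Definition Gsum (n : nat) (F : nat -> R -> R) (x : R) : R :=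
  Rsum_seq (iota 1 n) (fun i => F i x).

(* On every outcome, V / max(R, 1) is bounded by a sum over the true nulls j.
   A rejected j has PV_j <= c_R, so the first level r with PV_j <= c_r
   satisfies r <= R, whence 1/R <= 1/r: each rejected true null contributes at
   most the weight 1/r of the level (c_(r-1), c_r] containing its p-value
   (weight 1 when PV_j <= c_0 = 0, an event of probability F_j(0) = 0).
   Taking expectations turns the weight of level r into
   (F_j(c_r) - F_j(c_(r-1))) / r, giving the first bound; the second holds
   because the increments of the remaining F_i are nonnegative.
   Expectations are only taken of finite combinations of indicators of
   events, and {R = r, V = v} is an event because the rejected set is
   determined by the finitely many comparisons PV_i <= c_r and PV_i <= PV_j. *)

From Stdlib Require Import Reals.
From mathcomp Require Import ssreflect ssrfun ssrbool eqtype ssrnat seq path.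
From Stdlib Require Import Classical ClassicalEpsilon.
From Stdlib Require Import FunctionalExtensionality PropExtensionality Lra Lia.
From Stdlib Require Znat.
From mathcomp Require Import zify.

Set Implicit Arguments.
Unset Strict Implicit.
Local Open Scope R_scope.

Section ProbSpace.
Variables (Omega : Type) (P : prob_space Omega).
Implicit Types A B X S : Omega -> Prop.

Lemma event_ext A B : (forall w, A w <-> B w) -> A = B.
Proof.
move=> AB; apply: functional_extensionality => w.
exact: propositional_extensionality.
Qed.

Lemma measurable_ext A B : measurable P A -> (forall w, A w <-> B w) -> measurable P B.
Proof. by move=> mA /event_ext <-. Qed.

Lemma prob_ext A B : (forall w, A w <-> B w) -> prob P A = prob P B.
Proof. by move=> /event_ext ->. Qed.

Lemma measurable0 : measurable P (fun _ => False).
Proof. by apply: measurable_ext (meas_compl (meas_full P)) _ => w; tauto. Qed.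

Lemma measurableU A B : measurable P A -> measurable P B ->
  measurable P (fun w => A w \/ B w).
Proof.
move=> mA mB.
have := @meas_union _ P (fun k => if k is 0%N then A else B)
  (fun k => if k is 0%N then mA else mB).
move/measurable_ext; apply => w; split.
- by case=> -[|k] ABw; [left | right].
- by case=> ABw; [exists 0%N | exists 1%N].
Qed.

Lemma measurableI A B : measurable P A -> measurable P B ->
  measurable P (fun w => A w /\ B w).
Proof.
move=> mA mB.
have := meas_compl (measurableU (meas_compl mA) (meas_compl mB)).
by move/measurable_ext; apply => w; split => [/not_or_and [/NNPP ? /NNPP ?] | ] //; tauto.
Qed.

(* Countable additivity for the constant sequence of empty events makes the
   partial sums [(k + 1) * prob False] converge, which forces [prob False = 0]. *)
Lemma prob0 : prob P (fun _ => False) = 0.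
Proof.
have := @prob_sigma_add _ P (fun _ _ => False) (fun _ => measurable0)
  (fun _ _ _ _ F _ => F).
rewrite (prob_ext (B := fun _ => False)); last by move=> w; split => [[]|].
set p0 := prob P _ => sum_p0.
have [//|p0_gt0] : 0 = p0 \/ 0 < p0.
  by have := prob_nonneg measurable0; rewrite -/p0; lra.
have [N sum_N] := sum_p0 (p0 / 2) ltac:(lra).
have := sum_N N (le_n _); have := sum_N N.+1 (le_S _ _ (le_n _)).
rewrite /R_dist !sum_cte !S_INR => /Rabs_def2 ? /Rabs_def2 ?.
have := pos_INR N; nra.
Qed.

Lemma prob_split X S : measurable P X -> measurable P S ->
  prob P X = prob P (fun w => X w /\ S w) + prob P (fun w => X w /\ ~ S w).
Proof.
move=> mX mS.
pose A k : Omega -> Prop := match k with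
  | 0%N => fun w => X w /\ S w
  | 1%N => fun w => X w /\ ~ S w
  | _ => fun _ => False end.
have mA k : measurable P (A k).
  case: k => [|[|k]] /=; last exact: measurable0.
    exact: measurableI.
  exact: measurableI (meas_compl _).
have disjA k l w : k <> l -> A k w -> A l w -> False.
  by case: k l => [|[|k]] [|[|l]] //=; tauto.
have := prob_sigma_add mA disjA.
rewrite (prob_ext (B := X)); last first.
  move=> w; split; first by case=> -[|[|k]] /=; tauto.
  by case: (classic (S w)) => Sw Xw; [exists 0%N | exists 1%N].
move/uniqueness_sum; apply => eps eps_gt0; exists 1%N => m m_ge1.
have -> : sum_f_R0 (fun k => prob P (A k)) m =
    prob P (A 0%N) + prob P (A 1%N).
  elim: m m_ge1 => [|[|m] IH] m_ge1; first by inversion m_ge1.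
    by [].
  by rewrite /= in IH *; rewrite IH ?prob0 ?Rplus_0_r //; lia.
by rewrite /R_dist Rminus_diag Rabs_R0.
Qed.

End ProbSpace.

Definition sumR {T : Type} (f : T -> R) (s : seq T) : R :=
  foldr (fun x acc => f x + acc) 0 s.

Lemma Rsum_seqE (s : seq nat) (f : nat -> R) : Rsum_seq s f = sumR f s.
Proof. by []. Qed.

Section FiniteSums.
Variable T : Type.
Implicit Types (f g : T -> R) (s : seq T).

Lemma sumR_cat f s1 s2 : sumR f (s1 ++ s2) = sumR f s1 + sumR f s2.
Proof. by elim: s1 => [|x s1 /= ->]; rewrite /= ?Rplus_0_l ?Rplus_assoc. Qed.

Lemma sumR_map U f (h : U -> T) (s : seq U) :
  sumR f (map h s) = sumR (fun x => f (h x)) s.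
Proof. by elim: s => [|x s /= ->]. Qed.

Lemma sumR_flatten f (ss : seq (seq T)) : sumR f (flatten ss) = sumR (sumR f) ss.
Proof. by elim: ss => [|s ss /= <-]; rewrite ?sumR_cat. Qed.

Lemma eq_sumR f g s : f =1 g -> sumR f s = sumR g s.
Proof. by move=> fg; elim: s => [|x s /= ->]; rewrite ?fg. Qed.

Lemma sumR0 s : sumR (fun _ => 0) s = 0.
Proof. by elim: s => [|x s /= ->]; rewrite ?Rplus_0_l. Qed.

Lemma sumR_split f g s : sumR (fun x => f x + g x) s = sumR f s + sumR g s.
Proof. by elim: s => [|x s /= ->]; rewrite /= ?Rplus_0_l //; ring. Qed.

Lemma sumRN f s : sumR (fun x => - f x) s = - sumR f s.
Proof. by elim: s => [|x s /= ->]; rewrite /= ?Ropp_0 //; ring. Qed.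

Lemma mulR_sumR a f s : sumR (fun x => a * f x) s = a * sumR f s.
Proof. by elim: s => [|x s /= ->]; rewrite /= ?Rmult_0_r //; ring. Qed.

End FiniteSums.

Lemma exchange_sumR (T U : Type) (h : T -> U -> R) (s : seq T) (t : seq U) :
  sumR (fun x => sumR (h x) t) s = sumR (fun y => sumR (h^~ y) s) t.
Proof.
elim: s => [|x s /= ->]; first by elim: t => [|y t /= <-]; rewrite ?Rplus_0_l.
by rewrite (sumR_split (h x)).
Qed.

Section FiniteSumsEq.
Variable T : eqType.
Implicit Types (f g : T -> R) (s : seq T).

Lemma eq_in_sumR f g s : {in s, f =1 g} -> sumR f s = sumR g s.
Proof.
elim: s => [|x s IHs] //= fg; rewrite fg ?mem_head // IHs // => y sy.
by apply: fg; rewrite in_cons sy orbT.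
Qed.

Lemma sumR_ge0 f s : {in s, forall x, 0 <= f x} -> 0 <= sumR f s.
Proof.
elim: s => [|x s IHs] /= f_ge0; first lra.
have := f_ge0 x (mem_head _ _); have := IHs (sub_in1 (mem_behead (s := x :: s)) f_ge0).
lra.
Qed.

Lemma ler_sumR f g s : {in s, forall x, f x <= g x} -> sumR f s <= sumR g s.
Proof.
elim: s => [|x s IHs] /= fg; first lra.
have := fg x (mem_head _ _); have := IHs (sub_in1 (mem_behead (s := x :: s)) fg).
lra.
Qed.

Lemma sumR_filter_le (a : pred T) f s :
  {in s, forall x, 0 <= f x} -> sumR f (filter a s) <= sumR f s.
Proof.
elim: s => [|x s IHs] /= f_ge0; first lra.
have := f_ge0 x (mem_head _ _); have := IHs (sub_in1 (mem_behead (s := x :: s)) f_ge0).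
by case: (a x) => /=; lra.
Qed.

Lemma ler_sumR_term f s x :
  {in s, forall y, 0 <= f y} -> x \in s -> f x <= sumR f s.
Proof.
elim: s => [|y s IHs] //= f_ge0.
have fy := f_ge0 y (mem_head _ _).
have f_ge0' : {in s, forall z, 0 <= f z} := sub_in1 (mem_behead (s := y :: s)) f_ge0.
rewrite in_cons => /orP [/eqP -> | sx]; first by have := sumR_ge0 f_ge0'; lra.
by have := IHs f_ge0' sx; lra.
Qed.

Lemma sumR_delta f s k : uniq s ->
  sumR (fun x => if x == k then f x else 0) s = if k \in s then f k else 0.
Proof.
elim: s => [|x s IHs] //= /andP [xs s_uniq]; rewrite IHs // in_cons.
by case: eqVneq => [<-|] /=; [rewrite (negbTE xs) Rplus_0_r | rewrite Rplus_0_l].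
Qed.

Lemma sumR_count (a : pred T) x s :
  sumR (fun y => if a y then x else 0) s = INR (count a s) * x.
Proof.
elim: s => [|y s /= ->]; first by rewrite /=; ring.
by case: (a y); rewrite ?add1n ?add0n ?S_INR; ring.
Qed.

End FiniteSumsEq.

Definition indic (A : Prop) : R := if excluded_middle_informative A then 1 else 0.

Lemma indic1 (A : Prop) : A -> indic A = 1.
Proof. by rewrite /indic; case: excluded_middle_informative. Qed.

Lemma indic0 (A : Prop) : ~ A -> indic A = 0.
Proof. by rewrite /indic; case: excluded_middle_informative. Qed.

Lemma indic_ge0 (A : Prop) : 0 <= indic A.
Proof. by rewrite /indic; case: excluded_middle_informative => [a|a] /=; lra. Qed.

Lemma indicE (A : Prop) (b : bool) : (A <-> b) -> indic A = if b then 1 else 0.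
Proof. by case: b => Ab; [apply: indic1; apply/Ab | apply: indic0 => /Ab]. Qed.

(* A simple random variable is a finite list of weighted events [(a, S)],
   standing for the function [sum a 1_S]. *)
Section SimpleFunctions.
Variables (Omega : Type) (P : prob_space Omega).
Notation terms := (seq (R * (Omega -> Prop))).

Definition simple_val (l : terms) (w : Omega) : R :=
  sumR (fun t => t.1 * indic (t.2 w)) l.

Definition expect_on (A : Omega -> Prop) (l : terms) : R :=
  sumR (fun t => t.1 * prob P (fun w => A w /\ t.2 w)) l.

Definition measurable_terms (l : terms) : Prop :=
  foldr (fun t acc => measurable P t.2 /\ acc) True l.

Lemma measurable_terms_cat l1 l2 :
  measurable_terms l1 -> measurable_terms l2 -> measurable_terms (l1 ++ l2).
Proof. by elim: l1 => [|t l1 IHl] //= [mt ml1] ml2; split => //; apply: IHl. Qed.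

Lemma measurable_terms_map (T : eqType) (f : T -> R * (Omega -> Prop)) s :
  {in s, forall x, measurable P (f x).2} -> measurable_terms (map f s).
Proof.
elim: s => [|x s IHs] //= mf; split; first exact/mf/mem_head.
by apply: IHs => y sy; apply/mf/(mem_behead (s := x :: s)).
Qed.

Lemma measurable_terms_flatten (T : eqType) (f : T -> terms) s :
  {in s, forall x, measurable_terms (f x)} -> measurable_terms (flatten (map f s)).
Proof.
elim: s => [|x s IHs] //= mf; apply: measurable_terms_cat; first exact/mf/mem_head.
by apply: IHs => y sy; apply/mf/(mem_behead (s := x :: s)).
Qed.

Lemma expect_on_split A S l : measurable P A -> measurable P S -> measurable_terms l ->
  expect_on A l = expect_on (fun w => A w /\ S w) l + expect_on (fun w => A w /\ ~ S w) l.
Proof.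
move=> mA mS; elim: l => [|[a T] l IHl] /=; first by rewrite /expect_on /= Rplus_0_r.
move=> [mT ml]; rewrite /expect_on /= -/(expect_on _ l) IHl //.
rewrite (prob_split (measurableI mA mT) mS).
rewrite (prob_ext _ (A := fun w => (A w /\ T w) /\ S w)
                  (B := fun w => (A w /\ S w) /\ T w)); last by move=> w; tauto.
rewrite (prob_ext _ (A := fun w => (A w /\ T w) /\ ~ S w)
                  (B := fun w => (A w /\ ~ S w) /\ T w)); last by move=> w; tauto.
rewrite /expect_on; ring.
Qed.

(* Monotonicity of the expectation of simple functions, in the form that
   survives induction on the list: splitting [A] along the first event
   moves its weight into the constant. *)
Lemma expect_on_ge0 l c A : measurable_terms l -> measurable P A ->
  (forall w, A w -> 0 <= c + simple_val l w) -> 0 <= c * prob P A + expect_on A l.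
Proof.
elim: l c A => [|[a S] l IHl] c A /=.
  move=> _ mA c_ge0; rewrite /expect_on /= Rplus_0_r.
  case: (classic (exists w, A w)) => [[w Aw]|noA].
    have := c_ge0 w Aw; rewrite /simple_val /= Rplus_0_r => ?.
    by apply: Rmult_le_pos => //; apply: prob_nonneg.
  rewrite (prob_ext _ (B := fun _ => False)) ?prob0; first lra.
  by move=> w; split => // Aw; apply: noA; exists w.
move=> [mS ml] mA val_ge0.
rewrite [expect_on A _]/= (expect_on_split mA mS ml) (prob_split mA mS).
have in_S : 0 <= (c + a) * prob P (fun w => A w /\ S w) + expect_on (fun w => A w /\ S w) l.
  apply: IHl ml (measurableI mA mS) _ => w [Aw Sw].
  by have := val_ge0 w Aw; rewrite /simple_val /= indic1 //; lra.
have out_S : 0 <= c * prob P (fun w => A w /\ ~ S w) + expect_on (fun w => A w /\ ~ S w) l.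
  apply: IHl ml (measurableI mA (meas_compl mS)) _ => w [Aw NSw].
  by have := val_ge0 w Aw; rewrite /simple_val /= indic0 //; lra.
lra.
Qed.

Definition negate_terms (l : terms) : terms := [seq (- t.1, t.2) | t <- l].

Lemma simple_val_cat l1 l2 w : simple_val (l1 ++ l2) w = simple_val l1 w + simple_val l2 w.
Proof. exact: sumR_cat. Qed.

Lemma expect_on_cat A l1 l2 : expect_on A (l1 ++ l2) = expect_on A l1 + expect_on A l2.
Proof. exact: sumR_cat. Qed.

Lemma simple_val_negate l w : simple_val (negate_terms l) w = - simple_val l w.
Proof. by rewrite /simple_val sumR_map -sumRN; apply: eq_sumR => t /=; ring. Qed.

Lemma expect_on_negate A l : expect_on A (negate_terms l) = - expect_on A l.
Proof. by rewrite /expect_on sumR_map -sumRN; apply: eq_sumR => t /=; ring. Qed.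

Lemma measurable_terms_negate l : measurable_terms l -> measurable_terms (negate_terms l).
Proof. by elim: l => [|t l IHl] //= [mt ml]; split => //; apply: IHl. Qed.

Lemma expect_on_le l1 l2 : measurable_terms l1 -> measurable_terms l2 ->
  (forall w, simple_val l1 w <= simple_val l2 w) ->
  expect_on (fun _ => True) l1 <= expect_on (fun _ => True) l2.
Proof.
move=> ml1 ml2 le12.
have ml : measurable_terms (l2 ++ negate_terms l1).
  exact/measurable_terms_cat/measurable_terms_negate.
suff : 0 <= 0 * prob P (fun _ => True) + expect_on (fun _ => True) (l2 ++ negate_terms l1).
  by rewrite expect_on_cat expect_on_negate; lra.
apply: expect_on_ge0 ml (meas_full P) _ => w _.
by rewrite simple_val_cat simple_val_negate; have := le12 w; lra.
Qed.

End SimpleFunctions.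

Lemma RlebP (a b : R) : reflect (a <= b) (Rleb a b).
Proof. by rewrite /Rleb; case: Rle_dec => ab; constructor. Qed.

Definition pval_le (p : nat -> R) : rel nat := fun i j => Rleb (p i) (p j).

Lemma pval_le_total p : total (pval_le p).
Proof.
by move=> i j; rewrite /pval_le; case: (RlebP (p i) (p j)) => //= ?; apply/RlebP; lra.
Qed.

Lemma pval_le_trans p : transitive (pval_le p).
Proof. by move=> j i k /RlebP ? /RlebP ?; apply/RlebP; lra. Qed.

Lemma pval_le_refl p : reflexive (pval_le p).
Proof. by move=> i; apply/RlebP; lra. Qed.

Definition ranking (n : nat) (p : nat -> R) : seq nat := sort (pval_le p) (iota 1 n).

Lemma foldr_maxn_leq (s : seq nat) m : {in s, forall x, x <= m}%N -> (foldr maxn 0%N s <= m)%N.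
Proof.
elim: s => [|x s IHs] //= le_m; rewrite geq_max le_m ?mem_head // IHs // => y sy.
exact/le_m/(mem_behead (s := x :: s)).
Qed.

Lemma foldr_maxn_in (s : seq nat) : foldr maxn 0%N s = 0%N \/ foldr maxn 0%N s \in s.
Proof.
elim: s => [|x s IHs]; [by left | right].
have -> : foldr maxn 0%N (x :: s) = maxn x (foldr maxn 0%N s) by [].
case: leqP => [le_x|_]; last exact: mem_head.
case: IHs => [max0|]; last exact: (mem_behead (s := x :: s)).
by move: le_x; rewrite max0 leqn0 => /eqP ->; rewrite mem_head.
Qed.

Section StepUp.
Variables (n : nat) (c p : nat -> R).

Lemma ordered_pvalsE : ordered_pvals n p = [seq (i, p i) | i <- ranking n p].
Proof. by rewrite /ordered_pvals sort_map. Qed.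

Lemma size_ranking : size (ranking n p) = n.
Proof. by rewrite size_sort size_iota. Qed.

Lemma mem_ranking i : (i \in ranking n p) = (i \in iota 1 n).
Proof. exact: mem_sort. Qed.

Lemma uniq_ranking : uniq (ranking n p).
Proof. by rewrite sort_uniq iota_uniq. Qed.

Lemma sorted_ranking : sorted (pval_le p) (ranking n p).
Proof. exact: sort_sorted (@pval_le_total p) _. Qed.

Lemma H_ordE r : (0 < r <= n)%N -> H_ord n p r = nth 0%N (ranking n p) r.-1.
Proof.
case/andP => r_gt0 r_le_n; rewrite /H_ord ordered_pvalsE (nth_map 0%N) // size_ranking.
by case: r r_gt0 r_le_n.
Qed.

Lemma PV_ordE r : (0 < r <= n)%N -> PV_ord n p r = p (nth 0%N (ranking n p) r.-1).
Proof.
case/andP => r_gt0 r_le_n; rewrite /PV_ord ordered_pvalsE (nth_map 0%N) // size_ranking.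
by case: r r_gt0 r_le_n.
Qed.

Lemma stepup_k_leq : (stepup_k n c p <= n)%N.
Proof.
apply: foldr_maxn_leq => r; rewrite mem_filter mem_iota => /andP [_ /andP [_]].
by rewrite add1n ltnS.
Qed.

Lemma PV_ord_stepup_k : (0 < stepup_k n c p)%N ->
  PV_ord n p (stepup_k n c p) <= c (stepup_k n c p).
Proof.
rewrite /stepup_k.
case: (foldr_maxn_in [seq i <- iota 1 n | Rleb (PV_ord n p i) (c i)]) => [->//|].
by rewrite mem_filter => /andP [/RlebP].
Qed.

Lemma stepup_rejectedE : stepup_rejected n c p = take (stepup_k n c p) (ranking n p).
Proof.
rewrite -(map_nth_iota0 0%N) ?size_ranking ?stepup_k_leq // /stepup_rejected.
rewrite -(addn0 1%N) iotaDl -map_comp; apply/eq_in_map => r.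
rewrite mem_iota add0n => /andP [_ r_lt_k] /=.
by rewrite H_ordE // add1n (leq_trans r_lt_k stepup_k_leq).
Qed.

Lemma size_stepup_rejected : size (stepup_rejected n c p) = stepup_k n c p.
Proof. by rewrite stepup_rejectedE size_takel // size_ranking stepup_k_leq. Qed.

Lemma uniq_stepup_rejected : uniq (stepup_rejected n c p).
Proof. by rewrite stepup_rejectedE take_uniq // uniq_ranking. Qed.

Lemma stepup_rejected_sub j : j \in stepup_rejected n c p -> j \in iota 1 n.
Proof. by rewrite stepup_rejectedE => /mem_take; rewrite mem_ranking. Qed.

(* Every rejected hypothesis precedes H_(k) in the ranking, so its p-value is
   at most PV_(k) <= c_k. *)
Lemma stepup_rejected_le j : j \in stepup_rejected n c p -> p j <= c (stepup_k n c p).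
Proof.
rewrite stepup_rejectedE; set k := stepup_k n c p => j_rej.
have k_le_n : (k <= n)%N := stepup_k_leq.
set i := index j (take k (ranking n p)).
have i_lt_k : (i < k)%N.
  by rewrite -[X in (_ < X)%N](size_takel (s := ranking n p)) ?size_ranking // index_mem.
have := nth_index 0%N j_rej; rewrite nth_take // => nth_i.
have k_gt0 : (0 < k)%N by apply: leq_ltn_trans i_lt_k.
have := PV_ord_stepup_k k_gt0; rewrite PV_ordE ?k_gt0 // -/k.
have : pval_le p (nth 0%N (ranking n p) i) (nth 0%N (ranking n p) k.-1).
  apply: (sorted_leq_nth (@pval_le_trans p) (@pval_le_refl p) 0%N sorted_ranking);
    rewrite ?inE ?size_ranking; lia.
by rewrite nth_i => /RlebP; lra.
Qed.

End StepUp.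

Lemma ranking_congr n p1 p2 :
  {in iota 1 n &, forall i j, pval_le p1 i j = pval_le p2 i j} ->
  ranking n p1 = ranking n p2.
Proof.
case: n => [//|n] same_le.
(* [clamp] keeps [sort_map] from comparing indices outside [iota 1 n]. *)
pose clamp i := if i \in iota 1 n.+1 then i else 1%N.
have clamp_in i : clamp i \in iota 1 n.+1.
  by rewrite /clamp; case: ifP => // _; rewrite mem_iota; lia.
have clamp_id : map clamp (iota 1 n.+1) = iota 1 n.+1.
  by rewrite -[RHS]map_id; apply/eq_in_map => i iota_i; rewrite /clamp iota_i.
rewrite /ranking -clamp_id !sort_map; congr (map clamp (sort _ _)).
by do 2 apply: functional_extensionality => ?; apply: same_le.
Qed.

Lemma stepup_rejected_congr n c p1 p2 :
  {in iota 1 n &, forall i j, pval_le p1 i j = pval_le p2 i j} ->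
  {in iota 1 n &, forall i r, Rleb (p1 i) (c r) = Rleb (p2 i) (c r)} ->
  stepup_rejected n c p1 = stepup_rejected n c p2.
Proof.
move=> same_le same_crit; rewrite !stepup_rejectedE (ranking_congr same_le).
congr (take _ _); rewrite /stepup_k; congr foldr; apply: eq_in_filter => r iota_r.
have r_range : (0 < r <= n)%N by move: iota_r; rewrite mem_iota; lia.
rewrite !PV_ordE // -(ranking_congr same_le) same_crit //.
by rewrite -(mem_ranking n p1) mem_nth // size_ranking; lia.
Qed.

Lemma count_filter_mem (a : pred nat) (r s : seq nat) : uniq r -> uniq s ->
  {subset r <= s} -> count a r = count (fun x => x \in r) (filter a s).
Proof.
move=> r_uniq s_uniq rs; rewrite -!size_filter; apply/perm_size/uniq_perm.
- exact: filter_uniq.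
- by do 2 apply: filter_uniq.
move=> x; rewrite !mem_filter.
by case r_x: (x \in r); [rewrite /= (rs _ r_x) andbT | rewrite andbF].
Qed.

Section Measurability.
Variables (Omega : Type) (P : prob_space Omega).

Lemma measurable_bool_pattern (X : eqType) (e : X -> Omega -> bool) (s : seq X)
    (Q : seq bool -> Prop) :
  {in s, forall x, measurable P (fun w => e x w)} ->
  measurable P (fun w => Q [seq e x w | x <- s]).
Proof.
elim: s Q => [|x s IHs] Q /= me.
  case: (classic (Q [::])) => Q0.
    by apply: measurable_ext (meas_full P) _ => w; split.
  by apply: measurable_ext (measurable0 P) _ => w; split.
have mx := me x (mem_head _ _).
have ms : {in s, forall y, measurable P (fun w => e y w)}.
  by move=> y sy; apply/me/(mem_behead (s := x :: s)).
have mtrue := IHs (fun l => Q (true :: l)) ms.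
have mfalse := IHs (fun l => Q (false :: l)) ms.
apply: measurable_ext (measurableU (measurableI mx mtrue)
  (measurableI (meas_compl mx) mfalse)) _ => w.
case: (e x w); split => [[[_ ?]|[? _]] | ?] //; by [left | right].
Qed.

(* [X > Y >= 0] iff some grid point [k / m] separates them. *)
Lemma measurable_le (X Y : Omega -> R) :
  (forall x, measurable P (fun w => X w <= x)) ->
  (forall x, measurable P (fun w => Y w <= x)) -> (forall w, 0 <= Y w) ->
  measurable P (fun w => X w <= Y w).
Proof.
move=> mX mY Y_ge0.
pose q (m k : nat) := INR k / INR m.
have msep : measurable P (fun w => exists m k, Y w <= q m k /\ ~ X w <= q m k).
  apply: (@meas_union _ P (fun m w => exists k, Y w <= q m k /\ ~ X w <= q m k)) => m.
  apply: (@meas_union _ P (fun k w => Y w <= q m k /\ ~ X w <= q m k)) => k.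
  exact: measurableI (mY _) (meas_compl (mX _)).
apply: measurable_ext (meas_compl msep) _ => w; split; last first.
  by move=> XY [m [k [Yq NXq]]]; lra.
move=> nosep; apply: NNPP => NXY; apply: nosep.
have [N [N_gap N_gt0]] := archimed_cor1 (X w - Y w) ltac:(lra).
have N_pos : 0 < INR N by apply: lt_0_INR.
have [up_gt up_le] := archimed (Y w * INR N).
have up_ge0 : (0 <= up (Y w * INR N))%Z.
  by apply: le_IZR; have := Y_ge0 w; nra.
set z := up (Y w * INR N) in up_gt up_le up_ge0 *.
have zN : IZR z / INR N * INR N = IZR z by field; lra.
exists N, (Z.to_nat z); rewrite /q INR_IZR_INZ Znat.Z2Nat.id //; split.
  by apply: (Rmult_le_reg_r (INR N)) => //; rewrite zN; lra.
move=> /(Rmult_le_compat_r (INR N) _ _ (Rlt_le _ _ N_pos)); rewrite zN.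
have : 1 < (X w - Y w) * INR N.
  by have := Rmult_lt_compat_r _ _ _ N_pos N_gap; rewrite Rinv_l; lra.
nra.
Qed.

End Measurability.

Section MeasurableStepUp.
Variables (Omega : Type) (P : prob_space Omega) (n : nat) (c : nat -> R).
Variable PV : nat -> Omega -> R.
Hypothesis PV_ge0 : forall i w, (1 <= i <= n)%N -> 0 <= PV i w.
Hypothesis PV_measurable : forall i x, (1 <= i <= n)%N -> measurable P (fun w => PV i w <= x).

(* The rejected set is determined by the finite pattern of the events
   [PV_i <= c_r] and [PV_i <= PV_j]. *)
Lemma measurable_stepup_rejected (Q : seq nat -> Prop) :
  measurable P (fun w => Q (stepup_rejected n c (fun i => PV i w))).
Proof.
pose tests := [seq (b, ij) | b <- [:: false; true],
                             ij <- [seq (i, j) | i <- iota 1 n, j <- iota 1 n]].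
pose test (t : bool * (nat * nat)) w :=
  if t.1 then Rleb (PV t.2.1 w) (c t.2.2) else Rleb (PV t.2.1 w) (PV t.2.2 w).
have tests_in b i j : i \in iota 1 n -> j \in iota 1 n -> (b, (i, j)) \in tests.
  move=> iota_i iota_j; apply/allpairsPdep; exists b, (i, j); split => //.
    by case: b.
  by apply/allpairsPdep; exists i, j.
have mtest : {in tests, forall t, measurable P (fun w => test t w)}.
  move=> _ /allpairsPdep [b [_ [_ /allpairsPdep [i [j [iota_i iota_j ->]]] ->]]].
  have i_range : (1 <= i <= n)%N by move: iota_i; rewrite mem_iota; lia.
  have j_range : (1 <= j <= n)%N by move: iota_j; rewrite mem_iota; lia.
  rewrite /test /=; case: b.
    by apply: measurable_ext (PV_measurable (c j) i_range) _ => w; split => /RlebP.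
  apply: measurable_ext (measurable_le (fun x => PV_measurable x i_range)
    (fun x => PV_measurable x j_range) (fun w => PV_ge0 w j_range)) _.
  by move=> w; split => /RlebP.
pose same_pattern (bs : seq bool) := exists w', [seq test t w' | t <- tests] = bs /\
  Q (stepup_rejected n c (fun i => PV i w')).
apply: measurable_ext (measurable_bool_pattern same_pattern mtest) _ => w; split.
- move=> [w' [/eq_in_map same Qw']].
  rewrite -(stepup_rejected_congr (p1 := fun i => PV i w')) //.
  + by move=> i j iota_i iota_j; apply: (same (false, (i, j))); apply: tests_in.
  + by move=> i r iota_i iota_r; apply: (same (true, (i, r))); apply: tests_in.
- by move=> Qw; exists w.
Qed.

End MeasurableStepUp.

Definition fdp (I : pred nat) (rejected : seq nat) : R :=
  INR (count I rejected) / INR (maxn (size rejected) 1).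

Lemma fdp_nil (I : pred nat) : fdp I [::] = 0.
Proof. by rewrite /fdp /= /Rdiv Rmult_0_l. Qed.

Definition level_weight (n : nat) (c : nat -> R) (x : R) : R :=
  sumR (fun r => / INR r * indic (x <= c r /\ ~ x <= c r.-1)) (iota 1 n) + indic (x <= 0).

Section LevelWeight.
Variables (n : nat) (c : nat -> R).
Hypothesis c0 : c 0%N = 0.

Lemma level_term_ge0 x : {in iota 1 n, forall r,
  0 <= / INR r * indic (x <= c r /\ ~ x <= c r.-1)}.
Proof.
move=> r; rewrite mem_iota => r_range.
apply: Rmult_le_pos (indic_ge0 _); apply/Rlt_le/Rinv_0_lt_compat/lt_0_INR; lia.
Qed.

Lemma level_weight_ge0 x : 0 <= level_weight n c x.
Proof. exact: Rplus_le_le_0_compat (sumR_ge0 (level_term_ge0 x)) (indic_ge0 _). Qed.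

(* If [x <= c_k], the level of [x] is some [r <= k], and [1/k <= 1/r]. *)
Lemma inv_le_level_weight k x : (0 < k <= n)%N -> x <= c k -> / INR k <= level_weight n c x.
Proof.
move=> k_range x_le_ck; rewrite /level_weight.
have k_ge1 : 1 <= INR k by apply: (le_INR 1); apply/leP; lia.
have reach : exists r, Rleb x (c r) by exists k; apply/RlebP.
case: (ex_minnP reach) => r /RlebP x_le_cr r_min.
have r_le_k : (r <= k)%N by apply/r_min/RlebP.
have S_ge0 : 0 <= sumR _ (iota 1 n) := sumR_ge0 (level_term_ge0 x).
have := indic_ge0 (x <= 0).
case: r x_le_cr r_min r_le_k => [|r] x_le_cr r_min r_le_k.
  rewrite c0 in x_le_cr; rewrite indic1 //.
  have : / INR k <= 1 by rewrite -Rinv_1; apply: Rinv_le_contravar; lra.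
  lra.
have level_r : x <= c r.+1 /\ ~ x <= c r.+1.-1.
  by split => // /RlebP /r_min; rewrite ltnn.
have r_in : r.+1 \in iota 1 n by rewrite mem_iota; lia.
have term_r : / INR r.+1 <=
    sumR (fun r => / INR r * indic (x <= c r /\ ~ x <= c r.-1)) (iota 1 n).
  rewrite -[/ INR _]Rmult_1_r -(indic1 level_r).
  exact: ler_sumR_term (level_term_ge0 x) r_in.
have : / INR k <= / INR r.+1.
  by apply: Rinv_le_contravar; [apply: lt_0_INR; lia | apply/le_INR/leP].
lra.
Qed.

Lemma fdp_le_level_weight (I : pred nat) (p : nat -> R) :
  fdp I (stepup_rejected n c p) <=
  sumR (fun j => level_weight n c (p j)) [seq j <- iota 1 n | I j].
Proof.
set rej := stepup_rejected n c p.
have [/size0nil ->|size_gt0] := posnP (size rej).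
  by rewrite fdp_nil; apply: sumR_ge0 => j _; apply: level_weight_ge0.
have -> : fdp I rej = sumR (fun j => if j \in rej then / INR (size rej) else 0)
                           [seq j <- iota 1 n | I j].
  rewrite sumR_count /fdp (maxn_idPl size_gt0) -count_filter_mem //.
  - exact: uniq_stepup_rejected.
  - exact: iota_uniq.
  - exact: stepup_rejected_sub.
apply: ler_sumR => j _; case: ifP => j_rej; first last.
  exact: level_weight_ge0.
rewrite /rej size_stepup_rejected in size_gt0 *.
apply: inv_le_level_weight; first by rewrite size_gt0 stepup_k_leq.
exact: stepup_rejected_le.
Qed.

End LevelWeight.

Lemma cdf_at0 (f : R -> R) :
  (forall x y, 0 <= x -> x <= y -> y <= 1 -> f x <= f y) -> 0 <= f 0 <= 1 ->
  (forall u, 0 < u < 1 -> f u <= u) -> f 0 = 0.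
Proof.
move=> f_mono [f0_ge0 f0_le1] f_sub.
case: (Rle_lt_or_eq_dec _ _ f0_ge0) => [f0_gt0|//].
have := f_mono 0 (f 0 / 2) ltac:(lra) ltac:(lra) ltac:(lra).
have := f_sub (f 0 / 2) ltac:(lra).
lra.
Qed.

Section StepUpFDR.
Variables (Omega : Type) (P : prob_space Omega) (n : nat).
Variables (PV : nat -> Omega -> R) (I : nat -> bool) (F : nat -> R -> R) (c : nat -> R).
Hypothesis PV_range : forall i w, (1 <= i <= n)%N -> 0 <= PV i w <= 1.
Hypothesis PV_measurable :
  forall i x, (1 <= i <= n)%N -> measurable P (fun w => PV i w <= x).
Hypothesis F_mono : forall i x y, (1 <= i <= n)%N -> 0 <= x -> x <= y -> y <= 1 ->
  F i x <= F i y.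
Hypothesis F_range : forall i x, (1 <= i <= n)%N -> 0 <= x <= 1 -> 0 <= F i x <= 1.
Hypothesis F_null : forall j x, (1 <= j <= n)%N -> I j -> 0 <= x <= 1 ->
  prob P (fun w => PV j w <= x) = F j x.
Hypothesis F_sub : forall i u, (1 <= i <= n)%N -> 0 < u < 1 -> F i u <= u.
Hypothesis c0 : c 0%N = 0.
Hypothesis c_mono : forall r, (1 <= r <= n)%N -> c r.-1 <= c r.
Hypothesis c_le1 : forall r, (1 <= r <= n)%N -> c r <= 1.

Local Notation nulls := [seq j <- iota 1 n | I j].

Lemma iota_range r : r \in iota 1 n -> (1 <= r <= n)%N.
Proof. by rewrite mem_iota; lia. Qed.

Lemma null_range j : j \in nulls -> I j /\ (1 <= j <= n)%N.
Proof. by rewrite mem_filter => /andP [Ij /iota_range]. Qed.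

Lemma crit_ge0 r : (r <= n)%N -> 0 <= c r.
Proof.
elim: r => [|r IHr] r_le_n; first by rewrite c0; lra.
have r_range : (1 <= r.+1 <= n)%N by rewrite r_le_n.
by have := IHr (ltnW r_le_n); have := c_mono r_range; rewrite succnK; lra.
Qed.

Lemma crit_level r : (1 <= r <= n)%N -> 0 <= c r.-1 /\ c r.-1 <= c r /\ c r <= 1.
Proof.
move=> r_range; split; last by split; [apply: c_mono | apply: c_le1].
by apply: crit_ge0; case/andP: r_range => _; apply: leq_trans (leq_pred r).
Qed.

Definition fdr_terms : seq (R * (Omega -> Prop)) :=
  flatten [seq [seq (INR v / INR r, fun w => num_R n c (fun i => PV i w) = r /\
                                             num_V n I c (fun i => PV i w) = v)
               | v <- iota 0 n.+1] | r <- iota 1 n].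

Definition level_terms : seq (R * (Omega -> Prop)) :=
  flatten [seq [seq (/ INR r, fun w => PV j w <= c r /\ ~ PV j w <= c r.-1) | j <- nulls]
          | r <- iota 1 n]
  ++ [seq (1, fun w => PV j w <= 0) | j <- nulls].

Lemma FDR_expect_on : FDR P n I c PV = expect_on P (fun _ => True) fdr_terms.
Proof.
rewrite /FDR /expect_on sumR_flatten sumR_map Rsum_seqE; apply: eq_sumR => r.
rewrite sumR_map Rsum_seqE; apply: eq_sumR => v /=.
by congr (_ * _); apply: prob_ext => w; split => [|[]].
Qed.

Lemma measurable_fdr_terms : measurable_terms P fdr_terms.
Proof.
apply: measurable_terms_flatten => r _; apply: measurable_terms_map => v _ /=.
exact: (@measurable_stepup_rejected _ P n c PV
  (fun i w i_range => proj1 (PV_range w i_range)) PV_measurable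
  (fun rej => size rej = r /\ count I rej = v)).
Qed.

Lemma simple_val_fdr_terms w :
  simple_val fdr_terms w = fdp I (stepup_rejected n c (fun i => PV i w)).
Proof.
set rej := stepup_rejected n c _.
have size_le : (size rej <= n)%N by rewrite size_stepup_rejected stepup_k_leq.
rewrite /simple_val sumR_flatten sumR_map.
under eq_sumR => r.
  rewrite sumR_map (eq_sumR (g := fun v =>
    if v == count I rej then if r == size rej then INR v / INR r else 0 else 0)).
    rewrite sumR_delta ?iota_uniq // mem_iota add0n ltnS (leq_trans (count_size _ _) size_le).
    over.
  move=> v /=; rewrite (indicE (b := (r == size rej) && (v == count I rej))).
    by case: (r == size rej); case: (v == count I rej) => /=; ring.
  by rewrite /num_R /num_V -/rej; split => [[-> ->]|/andP [/eqP -> /eqP ->]]; rewrite ?eqxx.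
rewrite sumR_delta ?iota_uniq // mem_iota.
have [/size0nil ->|size_gt0] := posnP (size rej); first by rewrite fdp_nil.
by rewrite add1n ltnS size_le /fdp (maxn_idPl size_gt0).
Qed.

Lemma measurable_level_terms : measurable_terms P level_terms.
Proof.
apply: measurable_terms_cat.
  apply: measurable_terms_flatten => r _.
  apply: measurable_terms_map => j /null_range [_ j_range] /=.
  exact: measurableI (PV_measurable (c r) j_range)
    (meas_compl (PV_measurable (c r.-1) j_range)).
by apply: measurable_terms_map => j /null_range [_ j_range]; apply: PV_measurable.
Qed.

Lemma simple_val_level_terms w :
  simple_val level_terms w = sumR (fun j => level_weight n c (PV j w)) nulls.
Proof.
rewrite simple_val_cat /simple_val sumR_flatten !sumR_map sumR_split.
congr (_ + _); last by apply: eq_sumR => j /=; rewrite Rmult_1_l.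
under eq_sumR => r do rewrite sumR_map.
exact: exchange_sumR.
Qed.

Lemma prob_level j r : j \in nulls -> r \in iota 1 n ->
  prob P (fun w => True /\ (PV j w <= c r /\ ~ PV j w <= c r.-1)) =
  F j (c r) - F j (c r.-1).
Proof.
move=> /null_range [Ij j_range] /iota_range r_range.
have := crit_level r_range => -[cr1_ge0 [cr1_le_cr cr_le1]].
rewrite (prob_ext P (B := fun w => PV j w <= c r /\ ~ PV j w <= c r.-1)); last first.
  by move=> w; split => [[]|].
have := prob_split (PV_measurable (c r) j_range) (PV_measurable (c r.-1) j_range).
rewrite (prob_ext P (A := fun w => PV j w <= c r /\ PV j w <= c r.-1)
                  (B := fun w => PV j w <= c r.-1)); last first.
  by move=> w; split => [[]|] //; split => //; lra.
by rewrite !F_null //; lra.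
Qed.

Lemma prob_null_at0 j : j \in nulls -> prob P (fun w => True /\ PV j w <= 0) = 0.
Proof.
move=> /null_range [Ij j_range].
rewrite (prob_ext P (B := fun w => PV j w <= 0)); last by move=> w; split => [[]|].
rewrite F_null //; last lra.
apply: cdf_at0 => [x y||u]; [exact: F_mono | | exact: F_sub].
by apply: F_range => //; lra.
Qed.

Lemma expect_level_terms : expect_on P (fun _ => True) level_terms =
  Rsum_seq (iota 1 n) (fun r =>
    Rsum_seq nulls (fun j => / INR r * (F j (c r) - F j (c r.-1)))).
Proof.
rewrite expect_on_cat {2}/expect_on sumR_map (eq_in_sumR (g := fun _ => 0)); last first.
  by move=> j /prob_null_at0 /= ->; rewrite Rmult_0_r.
rewrite sumR0 Rplus_0_r /expect_on sumR_flatten sumR_map Rsum_seqE.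
apply: eq_in_sumR => r r_in; rewrite sumR_map Rsum_seqE.
by apply: eq_in_sumR => j j_in /=; rewrite prob_level.
Qed.

Lemma level_bound_le_Gsum_bound :
  Rsum_seq (iota 1 n) (fun r =>
    Rsum_seq nulls (fun j => / INR r * (F j (c r) - F j (c r.-1)))) <=
  Rsum_seq (iota 1 n) (fun r => / INR r * (Gsum n F (c r) - Gsum n F (c r.-1))).
Proof.
rewrite !Rsum_seqE; apply: ler_sumR => r /iota_range r_range.
rewrite /Gsum !Rsum_seqE /Rminus -sumRN -sumR_split -mulR_sumR.
apply: sumR_filter_le => j /iota_range j_range.
have := crit_level r_range => -[cr1_ge0 [cr1_le_cr cr_le1]].
apply: Rmult_le_pos; first by apply/Rlt_le/Rinv_0_lt_compat/lt_0_INR; lia.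
by have := F_mono j_range cr1_ge0 cr1_le_cr cr_le1; lra.
Qed.

End StepUpFDR.

Theorem proposition1
  (Omega : Type) (P : prob_space Omega) (n : nat)
  (PV : nat -> Omega -> R) (I : nat -> bool) (F : nat -> R -> R) (c : nat -> R)
  (HPV01 : forall i w, (1 <= i <= n)%N -> 0 <= PV i w <= 1)
  (HPVmeas : forall i x, (1 <= i <= n)%N -> measurable P (fun w => PV i w <= x))
  (HFmono : forall i x y, (1 <= i <= n)%N -> 0 <= x -> x <= y -> y <= 1 ->
             F i x <= F i y)
  (HFrange : forall i x, (1 <= i <= n)%N -> 0 <= x <= 1 -> 0 <= F i x <= 1)
  (HFnull : forall j x, (1 <= j <= n)%N -> I j -> 0 <= x <= 1 ->
             prob P (fun w => PV j w <= x) = F j x)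
  (HFsub : forall i u, (1 <= i <= n)%N -> 0 < u < 1 -> F i u <= u)
  (Hc0 : c 0%N = 0)
  (Hcmono : forall r, (1 <= r <= n)%N -> c r.-1 <= c r)
  (Hc1 : forall r, (1 <= r <= n)%N -> c r <= 1) :
  let B1 := Rsum_seq (iota 1 n) (fun r =>
              Rsum_seq [seq j <- iota 1 n | I j] (fun j =>
                / INR r * (F j (c r) - F j (c r.-1)))) in
  let B2 := Rsum_seq (iota 1 n) (fun r =>
              / INR r * (Gsum n F (c r) - Gsum n F (c r.-1))) in
  FDR P n I c PV <= B1 /\ B1 <= B2.
Proof.
move=> B1 B2; split; last exact: level_bound_le_Gsum_bound HFmono Hc0 Hcmono Hc1.
rewrite FDR_expect_on /B1.
rewrite -(expect_level_terms HPVmeas HFmono HFrange HFnull HFsub Hc0 Hcmono Hc1).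
apply: expect_on_le.
- exact: measurable_fdr_terms HPV01 HPVmeas.
- exact: measurable_level_terms HPVmeas.
- move=> w; rewrite simple_val_fdr_terms simple_val_level_terms.
  exact: fdp_le_level_weight.
Qed.
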